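(* For any $m\in\mathbb{N}$ and $\alpha\in\mathbb{N}^n$ with $2\le|\alpha|\le m$, $$\sum_{(\alpha^1,\dots,\alpha^{m-1})\in\mathbb{N}(\alpha,m)}\frac{\alpha!}{\alpha^1!\cdots\alpha^{m-1}!}=\frac{(m-1)!}{(m-|\alpha|)!\,(|\alpha|-1)!}.$$
   Context: For $\alpha\in\mathbb{N}^n$, $|\alpha|=\sum_j\alpha_j$ and $\alpha!=\alpha_1!\cdots\alpha_n!$. $\mathbb{N}(\alpha,m)$ is the set of all $(\alpha^1,\dots,\alpha^{m-1})\in(\mathbb{N}^n)^{m-1}$ with $\alpha^1+\dots+\alpha^{m-1}=\alpha$ and $1\cdot|\alpha^1|+2\cdot|\alpha^2|+\dots+(m-1)\cdot|\alpha^{m-1}|=m$. *)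

From mathcomp Require Import all_boot all_order all_algebra.
Unset Printing Implicit Defensive.
Import Order.TTheory GRing.Theory Num.Theory.

Definition mabs {n : nat} (a : 'I_n -> nat) : nat := \sum_(i < n) a i.
Definition mfact {n : nat} (a : 'I_n -> nat) : nat := \prod_(i < n) (a i)`!.

(* A family (alpha^1, ..., alpha^{m-1}) is encoded as f : 'I_(m-1) -> ('I_n -> ...),
   where f j stands for alpha^{j+1}.  Entries are taken in 'I_(|alpha|+1), i.e.
   bounded by |alpha|; this is no restriction, since any family summing to
   alpha has entries alpha^j_i <= alpha_i <= |alpha|. *)
Definition fam (n m B : nat) := {ffun 'I_m.-1 -> {ffun 'I_n -> 'I_B.+1}}.

Definition inN (n : nat) (a : 'I_n -> nat) (m : nat) (f : fam n m (mabs a)) : bool :=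
  [forall i : 'I_n, \sum_(j < m.-1) (f j i : nat) == a i] &&
  (\sum_(j < m.-1) j.+1 * mabs (fun i => (f j i : nat)) == m).

From mathcomp Require Import all_boot all_order all_algebra.
From mathcomp Require Import zify.
Import Order.TTheory GRing.Theory Num.Theory.
Local Open Scope ring_scope.

(* Multiplying over i the multinomial expansions of (x_1 + ... + x_{m-1})^a_i
   at x_j := X^j shows that the left-hand side is the coefficient of X^m in
   (X + ... + X^{m-1})^|a| = X^|a| (1 + ... + X^{m-2})^|a|.  For d < N the
   coefficient of X^d in (1 + ... + X^{N-1})^{k+1} is 'C(d + k, k) by the
   hockey-stick identity; |a| >= 2 guarantees m - |a| < m - 1, and
   'C(m - 1, |a| - 1) is the right-hand side. *)

Lemma sum_bin_addr d k : (\sum_(j < d.+1) 'C(j + k, k) = 'C(d + k.+1, k.+1))%N.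
Proof.
elim: d => [|d IHd]; first by rewrite big_ord1 add0n !binn.
by rewrite big_ord_recr /= IHd addnS binS addSn addnS.
Qed.

Section FactorialsInNumField.

Variable R : numFieldType.

Lemma natr_fact_neq0 c : c`!%:R != 0 :> R.
Proof. by rewrite pnatr_eq0 -lt0n fact_gt0. Qed.

Lemma natr_bin_fact s i : (i <= s)%N ->
  'C(s, i)%:R = s`!%:R / (i`!%:R * (s - i)`!%:R) :> R.
Proof.
move=> le_is; rewrite -(bin_fact le_is) !natrM mulfK //.
by rewrite mulf_neq0 ?natr_fact_neq0.
Qed.

End FactorialsInNumField.

Section Multinomial.

Context {R : numFieldType} {A : comAlgType R}.

(* exp (y Z) truncated after degree B: since exp turns sums into products, the
   product of the [trunc_exp B (x j)] agrees with exp ((\sum_j x j) Z) up to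
   degree B. *)
Definition trunc_exp B (y : A) : {poly A} :=
  \poly_(c < B.+1) (c`!%:R^-1 *: y ^+ c).

Lemma coef_prod_trunc_exp B r (x : 'I_r -> A) s : (s <= B)%N ->
  (\prod_(j < r) trunc_exp B (x j))`_s = s`!%:R^-1 *: (\sum_j x j) ^+ s.
Proof.
elim: r x s => [|r IHr] x s le_sB.
  rewrite !big_ord0 coefC; case: s le_sB => [|s] _ /=.
    by rewrite fact0 invr1 scale1r expr0.
  by rewrite expr0n scaler0.
rewrite !big_ord_recr /= coefM addrC exprDn scaler_sumr.
apply: eq_bigr => i _; have le_is : (i <= s)%N by rewrite -ltnS.
rewrite IHr ?(leq_trans le_is le_sB) //.
rewrite coef_poly ltnS (leq_trans (leq_subr _ _) le_sB).
rewrite -scaler_nat scalerA -scalerAl -scalerAr scalerA mulrC [_ ^+ i * _]mulrC.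
congr (_ *: _).
rewrite natr_bin_fact // mulrA mulVf ?natr_fact_neq0 // mul1r.
by rewrite invfM [RHS]mulrC.
Qed.

Lemma prod_trunc_exp B r (x : 'I_r -> A) :
  \prod_(j < r) trunc_exp B (x j) = \sum_(h : {ffun 'I_r -> 'I_B.+1})
    (\prod_j ((h j)`!%:R^-1 *: x j ^+ h j))%:P * 'X^(\sum_j (h j : nat)).
Proof.
under eq_bigr do rewrite /trunc_exp poly_def.
rewrite bigA_distr_bigA; apply: eq_bigr => h _.
by rewrite scaler_prod prodrXr mul_polyC.
Qed.

(* The bound [B >= s] on the exponents only serves to make them range over a
   finite type. *)
Theorem multinomial B r (x : 'I_r -> A) s : (s <= B)%N ->
  (\sum_j x j) ^+ s =
  \sum_(h : {ffun 'I_r -> 'I_B.+1} | \sum_j (h j : nat) == s)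
    (s`!%:R / \prod_j (h j)`!%:R) *: \prod_j x j ^+ h j.
Proof.
move=> le_sB.
have /(congr1 (fun p => s`!%:R *: p)) := coef_prod_trunc_exp B r x s le_sB.
rewrite scalerA mulfV ?natr_fact_neq0 // scale1r => <-.
rewrite prod_trunc_exp coef_sum scaler_sumr [RHS]big_mkcond /=.
apply: eq_bigr => h _.
rewrite coefCM coefXn eq_sym; case: (_ == s); last by rewrite mulr0 scaler0.
by rewrite mulr1 scaler_prod prodfV scalerA.
Qed.

End Multinomial.

Section SumsOfPowersOfX.

Context {R : numFieldType}.

Lemma coef_poly1_exp N k d : (d < N)%N ->
  ((\poly_(j < N) 1 : {poly R}) ^+ k.+1)`_d = 'C(d + k, k)%:R.
Proof.
elim: k d => [|k IHk] d lt_dN.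
  by rewrite expr1 coef_poly lt_dN addn0 bin0.
rewrite exprSr coefM.
under eq_bigr => j _.
  have lt_jN : (j < N)%N by rewrite (leq_ltn_trans _ lt_dN) // -ltnS.
  rewrite IHk // coef_poly (leq_ltn_trans (leq_subr _ _) lt_dN) mulr1.
  over.
by rewrite -natr_sum sum_bin_addr addnS.
Qed.

Lemma coef_sum_Xpow_exp m B : (2 <= B)%N -> (B <= m)%N ->
  ((\sum_(j < m.-1) 'X^(j.+1) : {poly R}) ^+ B)`_m
  = (m.-1)`!%:R / ((m - B)`!%:R * (B.-1)`!%:R).
Proof.
move=> le2B le_Bm.
have -> : \sum_(j < m.-1) 'X^(j.+1) = 'X * \poly_(j < m.-1) 1 :> {poly R}.
  by rewrite poly_def mulr_sumr; apply: eq_bigr => j _; rewrite scale1r exprS.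
rewrite exprMn coefXnM ltnNge le_Bm /=.
case: B le2B le_Bm => [|B] // le2B le_Bm.
rewrite coef_poly1_exp; last by lia.
have -> : (m - B.+1 + B = m.-1)%N by lia.
rewrite natr_bin_fact; last by lia.
have -> : (m.-1 - B = m - B.+1)%N by lia.
by rewrite [X in _ = _ / X]mulrC.
Qed.

Lemma sum_Xpow_exp_multinomial B r s : (s <= B)%N ->
  (\sum_(j < r) 'X^(j.+1) : {poly R}) ^+ s =
  \sum_(h : {ffun 'I_r -> 'I_B.+1} | \sum_j (h j : nat) == s)
    (s`!%:R / \prod_j (h j)`!%:R) *: 'X^(\sum_(j < r) j.+1 * h j).
Proof.
move=> le_sB; rewrite (multinomial B) //; apply: eq_bigr => h _.
by rewrite -prodrXr; congr (_ *: _); apply: eq_bigr => j _; rewrite exprM.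
Qed.

Lemma prod_cond_scaleXn (I : finType) (P : pred I) (c : I -> R) (w : I -> nat) :
  \prod_i (if P i then c i *: 'X^(w i) else 0) =
  if [forall i, P i] then (\prod_i c i) *: 'X^(\sum_i w i) else 0 :> {poly R}.
Proof.
case: forallP => [allP | /forallP/forallPn [i notPi]].
  by under eq_bigr => i _ do rewrite allP; rewrite scaler_prod prodrXr.
by rewrite (bigD1 i) //= (negbTE notPi) mul0r.
Qed.

End SumsOfPowersOfX.

Definition ffun_transpose {I J : finType} {T : Type}
    (F : {ffun I -> {ffun J -> T}}) : {ffun J -> {ffun I -> T}} :=
  [ffun j => [ffun i => F i j]].

Lemma ffun_transposeE {I J : finType} {T : Type}
    (F : {ffun I -> {ffun J -> T}}) j i :
  ffun_transpose F j i = F i j.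
Proof. by rewrite !ffunE. Qed.

Lemma ffun_transposeK {I J : finType} {T : Type} :
  cancel (@ffun_transpose I J T) (@ffun_transpose J I T).
Proof.
by move=> F; apply/ffunP => i; apply/ffunP => j; rewrite !ffun_transposeE.
Qed.

Lemma le_mabs {n} (a : 'I_n -> nat) i : (a i <= mabs a)%N.
Proof. by rewrite /mabs (bigD1 i) //= leq_addr. Qed.

Lemma sum_Xpow_exp_mabs {R : numFieldType} n r (a : 'I_n -> nat) :
  (\sum_(j < r) 'X^(j.+1) : {poly R}) ^+ mabs a =
  \sum_(f : {ffun 'I_r -> {ffun 'I_n -> 'I_(mabs a).+1}} |
          [forall i, \sum_j (f j i : nat) == a i])
    ((mfact a)%:R / \prod_j (mfact (fun i => (f j i : nat)))%:R) *:
    'X^(\sum_(j < r) j.+1 * mabs (fun i => (f j i : nat))).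
Proof.
rewrite [X in _ ^+ X]/mabs -prodrXr.
under eq_bigr => i _
  do rewrite (sum_Xpow_exp_multinomial (mabs a) r _ (le_mabs a i)) big_mkcond.
rewrite bigA_distr_bigA /= [RHS]big_mkcond /=.
rewrite (reindex (@ffun_transpose _ _ _)); last first.
  by exists (@ffun_transpose _ _ _) => F _; apply: ffun_transposeK.
apply: eq_bigr => f _; rewrite prod_cond_scaleXn.
congr (if _ then _ *: 'X^_ else _).
- by apply: eq_forallb => i; under eq_bigr do rewrite ffun_transposeE.
- rewrite prodf_div /mfact natr_prod exchange_big /=; congr (_ / _).
  apply: eq_bigr => j _; rewrite natr_prod.
  by apply: eq_bigr => i _; rewrite ffun_transposeE.
- rewrite exchange_big /=; apply: eq_bigr => j _.
  rewrite /mabs big_distrr /=.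
  by apply: eq_bigr => i _; rewrite ffun_transposeE.
Qed.

Theorem lemma7p3 (n m : nat) (a : 'I_n -> nat) :
  (2 <= mabs a)%N -> (mabs a <= m)%N ->
  \sum_(f : fam n m (mabs a) | @inN n a m f)
     ((mfact a)%:R / (\prod_(j < m.-1) (mfact (fun i => (f j i : nat)))%:R) : rat)
  = (m.-1)`!%:R / ((m - mabs a)`!%:R * ((mabs a).-1)`!%:R).
Proof.
move=> le2a le_am; rewrite -coef_sum_Xpow_exp // sum_Xpow_exp_mabs.
rewrite coef_sum /inN big_mkcondr; apply: eq_bigr => f _.
by rewrite coefZ coefXn eq_sym; case: eqP; rewrite ?mulr1 ?mulr0.
Qed.
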